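(* Let $f(q)=q^{-1}+\sum_{k\geq1}a_kq^k$ be completely $(2{+})$-replicable with replicates $f^{[n]}(q)=q^{-1}+\sum_{k\geq1}a_k^{[n]}q^k$, $n\in\mathbb{N}\cup\sqrt{2}\mathbb{N}$. Then $$\sigma_2\Big(f^{[2]}(2z),\,f^{[\sqrt{2}]}(z),\,f^{[\sqrt{2}]}\big(z+\tfrac12\big),\,f\big(\tfrac{z}{2}\big),\,f\big(\tfrac{z+1}{2}\big)\Big)=2a_2f(z)-f^{[2]}(z)+2(a_4-a_1)+2a_2^{[\sqrt{2}]}-\big(f^{[\sqrt{2}]}(z)\big)^2,$$ where $\sigma_2(x_1,\dots,x_5)=\sum_{1\leq i<j\leq5}x_ix_j$ is the second elementary symmetric function.
   Context: Here $q=e^{2\pi iz}$ and a series $h(q)$ is also written $h(z)$; for integers $a,d>0$ and $b$, $h\big(\frac{az+b}{d}\big)$ denotes the formal series obtained by substituting $q\mapsto e^{2\pi ib/d}q^{a/d}$ (so e.g. $h(z+\frac12)$ means $q\mapsto -q$, $h(\frac{z+1}{2})$ means $q\mapsto -q^{1/2}$). Faber polynomials: for $h=q^{-1}+\sum_{k\geq1}c_kq^k$ with complex coefficients, $P_{n,h}(X)$ is the unique monic polynomial of degree $n$ with $P_{n,h}(h)-q^{-n}$ containing only positive powers of $q$. A series $h$ of this form is $(2{+})$-replicable with $(2{+})$-replicates $h^{[n]},h^{[n\sqrt{2}]}$ ($n\in\mathbb{N}$, series of the same form, $h^{[1]}=h$) if for every $n\geq1$ $$P_{n,h}(h)=\sum_{\substack{ad=n\\0\leq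 b<d}}h^{[a]}\Big(\frac{az+b}{d}\Big)+\sum_{\substack{ad=n\\ d\ \text{even}\\0\leq b<d}}h^{[a\sqrt{2}]}\Big(\frac{2az+b}{d}\Big).$$ $f$ is completely $(2{+})$-replicable with replicates $f^{[n]}$, $n\in\mathbb{N}\cup\sqrt{2}\mathbb{N}$ ($f^{[1]}=f$), if $f$ is $(2{+})$-replicable with these replicates and for every $n\in\mathbb{N}\cup\sqrt{2}\mathbb{N}$ the series $f^{[n]}$ is $(2{+})$-replicable with $(2{+})$-replicates $(f^{[n]})^{[m]}=f^{[mn]}$, $m\in\mathbb{N}\cup\sqrt{2}\mathbb{N}$. *)

From mathcomp Require Import all_boot all_order all_algebra.
From mathcomp Require Import reals Rstruct.
From mathcomp.real_closed Require Import complex.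
From Stdlib Require Import Rdefinitions Rtrigo_def Rtrigo1.
Set Implicit Arguments. Unset Strict Implicit. Unset Printing Implicit Defensive.
Import GRing.Theory Num.Theory.
Local Open Scope ring_scope.

Notation C := (complex Rdefinitions.R).

Definition zeta (d : nat) (m : int) : C :=
  Complex (cos (2 * PI * m%:~R / d%:R)) (sin (2 * PI * m%:~R / d%:R)).

(* Laur v c represents  t^(-v) * \sum_{k>=0} c k t^k ;
   two representations are compared through their coefficient functions. *)
Record laur := Laur { lv : nat; lc : nat -> C }.

Definition lcoef (L : laur) (m : int) : C :=
  match (m + (lv L)%:Z) with Posz k => lc L k | Negz _ => 0 end.

Definition lzero : laur := Laur 0 (fun _ => 0).
Definition lone : laur := Laur 0 (fun k => if k == O then 1 else 0).
Definition lconst (x : C) : laur := Laur 0 (fun k => if k == O then x else 0).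
Definition ladd (L1 L2 : laur) : laur :=
  let v := maxn (lv L1) (lv L2) in
  Laur v (fun k => lcoef L1 (k%:Z - v%:Z) + lcoef L2 (k%:Z - v%:Z)).
Definition lscale (x : C) (L : laur) : laur := Laur (lv L) (fun k => x * lc L k).
Definition lsub (L1 L2 : laur) : laur := ladd L1 (lscale (-1) L2).
Definition lmul (L1 L2 : laur) : laur :=
  Laur (lv L1 + lv L2) (fun k => \sum_(i < k.+1) lc L1 i * lc L2 (k - i)).
Definition lpow (L : laur) (n : nat) : laur := iter n (lmul L) lone.
Definition leval (P : {poly C}) (L : laur) : laur :=
  \big[ladd/lzero]_(i < size P) lscale P`_i (lpow L i).
Definition leq_ser (L1 L2 : laur) : Prop := forall m : int, lcoef L1 m = lcoef L2 m.

(* A normalized series h = q^-1 + \sum_{k>=1} c k q^k is given by its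
   coefficient function c : nat -> C (the value c 0 is irrelevant).       *)

(* hsub a b d D c : the series h((a z + b)/d), i.e. h with
   q |-> e^(2 pi i b/d) q^(a/d), written as a Laurent series in the variable
   t = q^(1/D) (meaningful when d %| D, so that q^(a/d) = t^(a D/d)).       *)
Definition hsub (a b d D : nat) (c : nat -> C) : laur :=
  let v := divn (muln a D) d in
  Laur v (fun j => if j == O then zeta d (- b%:Z)
                   else if dvdn v j && leq 2 (divn j v)
                        then zeta d (muln b (divn j v).-1)%:Z * c (divn j v).-1
                        else 0).

Definition hser (c : nat -> C) : laur := hsub 1 0 1 1 c.

Definition is_faber (c : nat -> C) (n : nat) (P : {poly C}) : Prop :=
  P \is monic /\ size P = n.+1 /\
  forall m : int, m <= 0 -> lcoef (leval P (hser c)) m = (m == - n%:Z)%:R.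

(* (2+)-replicability of the series with coefficients r 1, with replicates
   h^[a] = series of r a and h^[a sqrt 2] = series of r2 a (a >= 1).
   The n-th identity is stated in the variable t = q^(1/n), in which every
   term h^[a]((az+b)/d) (ad = n) is a Laurent series.                       *)
Definition replicable2 (r r2 : nat -> nat -> C) : Prop :=
  forall n : nat, ltn 0 n -> forall P : {poly C}, is_faber (r 1%N) n P ->
    leq_ser (leval P (hsub 1 0 1 n (r 1%N)))
      (ladd
        (\big[ladd/lzero]_(d < n.+1 | ltn 0 d && (dvdn d n))
           \big[ladd/lzero]_(b < d) hsub (divn n d) b d n (r (divn n d)))
        (\big[ladd/lzero]_(d < n.+1 | [&& ltn 0 d, (dvdn d n) & ~~ odd d])
           \big[ladd/lzero]_(b < d) hsub (muln 2 (divn n d)) b d n (r2 (divn n d)))).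

(* Index set N u sqrt2 N: (m, s) stands for m * sqrt(2)^s (m >= 1). *)
Definition idx_mul (x y : nat * bool) : nat * bool :=
  (muln (muln x.1 y.1) (if x.2 && y.2 then 2 else 1), x.2 (+) y.2).

(* F (m, false) = f^[m], F (m, true) = f^[m sqrt 2]; f = F (1, false). *)
Definition completely_replicable2 (F : nat * bool -> nat -> C) : Prop :=
  forall x : nat * bool, ltn 0 x.1 ->
    replicable2 (fun m => F (idx_mul (m, false) x)) (fun m => F (idx_mul (m, true) x)).

Definition lsigma2 (xs : seq laur) : laur :=
  \big[ladd/lzero]_(i < size xs)
     \big[ladd/lzero]_(j < size xs | ltn i j) lmul (nth lzero xs i) (nth lzero xs j).

From Stdlib Require Import Rdefinitions Raxioms RIneq Rtrigo_def Rtrigo1.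
From mathcomp Require Import all_boot all_order all_algebra.
From mathcomp Require Import reals Rstruct.
From mathcomp.real_closed Require Import complex.
From mathcomp Require Import ring zify.
Set Implicit Arguments. Unset Strict Implicit. Unset Printing Implicit Defensive.
Import Order.TTheory GRing.Theory Num.Theory.
Local Open Scope ring_scope.

(* The five series x1, ..., x5 are exactly the terms of the n = 2 replication
   formula of f, so their sum is P2(f) = f^2 - 2 a1 and
   2 sigma2(x) = P2(f)^2 - (x1^2 + ... + x5^2).  Each square x_i^2 is given
   by an n = 2 replication formula again: for f^[2] at 2z, for f^[sqrt 2] at
   z and z + 1/2, and for f at z/2 and (z + 1)/2, i.e. after the substitutions
   q |-> +-q^(1/2), +-i q^(1/4).  Comparing P2(f)^2 with the n = 4 formula for
   P4(f) = f^4 - 4 a1 f^2 - 4 a2 f + 2 a1^2 - 4 a3, everything cancels except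
   the claimed right-hand side and the constant
   a1^2 + 2 a3 - a1^[2] - 2 a4 - 2 a2^[sqrt 2], which vanishes by comparing
   the q^2 coefficients of the n = 2 formula of f.
   To compute, a Laurent series in t = q^(1/2) is multiplied by a power of t,
   truncated below t^N and evaluated at t = s^2; every identity of series then
   becomes a congruence of polynomials in s = q^(1/4) modulo s^N. *)

(** * Roots of unity *)

Lemma zetaD d m1 m2 : zeta d (m1 + m2) = zeta d m1 * zeta d m2.
Proof.
rewrite /zeta intrD.
move: (m1%:~R : R) (m2%:~R : R) (d%:R : R) => a b e.
rewrite (_ : Rdiv _ e = Rplus (Rdiv (2 * PI * a) e) (Rdiv (2 * PI * b) e)); last first.
  by rewrite /Rdiv Rmult_plus_distr_l Rmult_plus_distr_r.
by rewrite cos_plus sin_plus /=; congr Complex; rewrite Rplus_comm.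
Qed.

Lemma zeta0 d : zeta d 0 = 1.
Proof.
rewrite /zeta (_ : Rdiv _ _ = 0%R) ?cos_0 ?sin_0 //.
by rewrite /Rdiv /= Rmult_0_r Rmult_0_l.
Qed.

Lemma zetaNK d m : zeta d (- m) * zeta d m = 1.
Proof. by rewrite -zetaD addNr zeta0. Qed.

Lemma zeta_nat d n : zeta d n%:Z = zeta d 1 ^+ n.
Proof. by elim: n => [|n IH]; rewrite ?zeta0 // -addn1 PoszD zetaD IH exprD. Qed.

Lemma zeta_half : zeta 2 1 = -1.
Proof.
rewrite /zeta (_ : Rdiv _ _ = PI).
  by rewrite cos_PI sin_PI; apply/eqP; rewrite eq_complex /= oppr0 !eqxx.
by rewrite RdivE !RmultE IZRposE INRE /=; field.
Qed.

Lemma zeta_quarter : zeta 4 1 = 'i.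
Proof.
rewrite /zeta (_ : Rdiv _ _ = Rdiv PI (IZR 2)); first by rewrite cos_PI2 sin_PI2 -complexiE.
by rewrite !RdivE !RmultE !IZRposE !INRE /=; field.
Qed.

Lemma zetaN d m : zeta d (- m) = (zeta d m)^-1.
Proof.
have nz : zeta d m != 0.
  by apply/eqP => h; move: (zetaNK d m); rewrite h mulr0 => /eqP; rewrite eq_sym oner_eq0.
by rewrite -[LHS]mulr1 -(mulfV nz) mulrA zetaNK mul1r.
Qed.

Lemma zeta_quarter2 : zeta 4 2 = -1.
Proof. by rewrite zeta_nat zeta_quarter sqrCi. Qed.

Lemma zeta_quarter3 : zeta 4 3 = - 'i.
Proof. by rewrite zeta_nat zeta_quarter exprS sqrCi mulrN1. Qed.

(** * Truncated power series *)

Reserved Notation "p = q %[modX N ]"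
  (at level 70, q at next level, format "'[hv ' p '/' =  q '/'  %[modX  N ] ']'").

Definition eqmodX (R : nzRingType) (N : nat) (p q : {poly R}) :=
  take_poly N p = take_poly N q.
Notation "p = q %[modX N ]" := (eqmodX N p q) : ring_scope.

Section TruncatedPowerSeries.
Variable R : comNzRingType.
Variable N : nat.
Implicit Types p q r : {poly R}.

Lemma eqmodXP p q : (forall k, (k < N)%N -> p`_k = q`_k) <-> p = q %[modX N].
Proof.
split=> [h|h k kN]; last by have := congr1 (coefp k) h; rewrite /= !coef_take_poly kN.
by apply/polyP => k; rewrite !coef_take_poly; case: ifP => // /h.
Qed.

Lemma eqmodX_refl p : p = p %[modX N].
Proof. by []. Qed.

Lemma eqmodX_eq p q : p = q -> p = q %[modX N].
Proof. by move->. Qed.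

Lemma eqmodX_sym p q : p = q %[modX N] -> q = p %[modX N].
Proof. by []. Qed.

Lemma eqmodX_trans p q r : p = q %[modX N] -> q = r %[modX N] -> p = r %[modX N].
Proof. exact: etrans. Qed.

Lemma eqmodXD p p' q q' :
  p = p' %[modX N] -> q = q' %[modX N] -> p + q = p' + q' %[modX N].
Proof. by rewrite /eqmodX !take_polyD => -> ->. Qed.

Lemma eqmodXN p p' : p = p' %[modX N] -> - p = - p' %[modX N].
Proof. by rewrite /eqmodX -!scaleN1r !take_polyZ => ->. Qed.

Lemma eqmodXZ a p p' : p = p' %[modX N] -> a *: p = a *: p' %[modX N].
Proof. by rewrite /eqmodX !take_polyZ => ->. Qed.

Lemma eqmodXM p p' q q' :
  p = p' %[modX N] -> q = q' %[modX N] -> p * q = p' * q' %[modX N].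
Proof.
move=> /eqmodXP h1 /eqmodXP h2; apply/eqmodXP => k kN; rewrite !coefM.
apply: eq_bigr => i _.
by rewrite h1 ?h2 //; apply: leq_ltn_trans kN; rewrite ?leq_subr // -ltnS.
Qed.

Lemma eqmodXX p q n : p = q %[modX N] -> p ^+ n = q ^+ n %[modX N].
Proof. by move=> h; elim: n => // n IH; rewrite !exprS; apply: eqmodXM. Qed.

Lemma eqmodX_sum I (s : seq I) (P : pred I) (F G : I -> {poly R}) :
  (forall i, P i -> F i = G i %[modX N]) ->
  \sum_(i <- s | P i) F i = \sum_(i <- s | P i) G i %[modX N].
Proof.
move=> h; elim/big_rec2: _ => // i p q Pi hpq.
exact: eqmodXD (h i Pi) hpq.
Qed.

Lemma eqmodX_XnM p q r : p - q = 'X^N * r -> p = q %[modX N].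
Proof.
move=> pq; apply/eqmodXP => k kN; apply/eqP; rewrite -subr_eq0 -coefB pq.
by rewrite coefXnM kN.
Qed.

Lemma eqmodX_lincomb c l r p q :
  l = r %[modX N] -> p - c * (l - r) = q %[modX N] -> p = q %[modX N].
Proof.
move=> lr; apply: eqmodX_trans; rewrite -[p in p = _ %[modX N]]subr0.
apply/eqmodXD/eqmodXN => //; rewrite -(mulr0 c) -(subrr r).
exact/eqmodXM/eqmodXD/eqmodX_sym.
Qed.

Lemma coef_comp_scaleX p g k : (p \Po (g *: 'X))`_k = g ^+ k * p`_k.
Proof.
elim/poly_ind: p k => [|q c IH] k; first by rewrite comp_poly0 !coef0 mulr0.
rewrite comp_poly_MXaddC -scalerAr !coefD !coefC coefZ !coefMX.
by case: k => [|k] /=; rewrite ?mulr0 ?add0r ?addr0 ?mul1r // IH exprS mulrA.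
Qed.

Lemma coef_comp_scaleXn p g s k : (0 < s)%N ->
  (p \Po (g *: 'X^s))`_k = if (s %| k)%N then g ^+ (k %/ s) * p`_(k %/ s) else 0.
Proof.
move=> s0; have -> : g *: 'X^s = (g *: 'X) \Po 'X^s by rewrite comp_polyZ comp_polyX.
by rewrite comp_polyA coef_comp_poly_Xn // coef_comp_scaleX.
Qed.

Lemma eqmodX_comp p q g s : (0 < s)%N ->
  p = q %[modX N] -> p \Po (g *: 'X^s) = q \Po (g *: 'X^s) %[modX N].
Proof.
move=> s0 /eqmodXP h; apply/eqmodXP => k kN.
rewrite !coef_comp_scaleXn //; case: ifP => // _.
by rewrite h // (leq_ltn_trans (leq_div _ _) kN).
Qed.
End TruncatedPowerSeries.

(** * Laurent series as truncated polynomials *)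

Lemma lcoef_eq0 L m : (m + (lv L)%:Z < 0) -> lcoef L m = 0.
Proof. by rewrite /lcoef; case: (m + _). Qed.

Lemma lcoefD L1 L2 m : lcoef (ladd L1 L2) m = lcoef L1 m + lcoef L2 m.
Proof.
rewrite {1}/lcoef /=; set v := maxn _ _.
case E: (m + v%:Z) => [k|k]; first by rewrite -E addrK.
have hv : m + v%:Z < 0 by rewrite E.
by rewrite !lcoef_eq0 ?addr0 // (le_lt_trans _ hv) // lerD2l lez_nat ?leq_maxl ?leq_maxr.
Qed.

Lemma lcoefZ x L m : lcoef (lscale x L) m = x * lcoef L m.
Proof. by rewrite /lcoef /=; case: (m + _) => //; rewrite mulr0. Qed.

Lemma lcoef0 m : lcoef lzero m = 0.
Proof. by rewrite /lcoef /=; case: (m + _). Qed.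

Lemma lcoefC x m : lcoef (lconst x) m = if m == 0 then x else 0.
Proof. by rewrite /lcoef /= addr0; case: m. Qed.

(* [ltrunc V N L] is t^V L truncated below t^N; no information is lost as
   long as [lv L <= V]. *)
Definition ltrunc (V N : nat) (L : laur) : {poly C} :=
  \poly_(j < N) lcoef L (j%:Z - V%:Z).

Lemma ltruncD V N L1 L2 : ltrunc V N (ladd L1 L2) = ltrunc V N L1 + ltrunc V N L2.
Proof. by apply/polyP => k; rewrite coefD !coef_poly lcoefD; case: ifP; rewrite ?addr0. Qed.

Lemma ltruncZ V N x L : ltrunc V N (lscale x L) = x *: ltrunc V N L.
Proof. by apply/polyP => k; rewrite coefZ !coef_poly lcoefZ; case: ifP; rewrite ?mulr0. Qed.

Lemma ltrunc0 V N : ltrunc V N lzero = 0.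
Proof. by apply/polyP => k; rewrite coef0 !coef_poly lcoef0; case: ifP. Qed.

Lemma ltruncB V N L1 L2 : ltrunc V N (lsub L1 L2) = ltrunc V N L1 - ltrunc V N L2.
Proof. by rewrite /lsub ltruncD ltruncZ scaleN1r. Qed.

Lemma ltrunc_sum V N I (s : seq I) (P : pred I) (F : I -> laur) :
  ltrunc V N (\big[ladd/lzero]_(i <- s | P i) F i) = \sum_(i <- s | P i) ltrunc V N (F i).
Proof. by apply: (big_morph (ltrunc V N)); [apply: ltruncD | apply: ltrunc0]. Qed.

Lemma eq_ltrunc V N L1 L2 : leq_ser L1 L2 -> ltrunc V N L1 = ltrunc V N L2.
Proof. by move=> h; apply/polyP => k; rewrite !coef_poly h. Qed.

Lemma ltruncC V N x : ltrunc V N (lconst x) = x%:P * 'X^V %[modX N].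
Proof.
apply/eqmodXP => k kN; rewrite coef_poly kN coefCM coefXn lcoefC subr_eq0 eqz_nat.
by case: (k == V); rewrite ?mulr1 ?mulr0.
Qed.

Lemma ltrunc_val N L : ltrunc (lv L) N L = \poly_(j < N) lc L j.
Proof. by apply/polyP => k; rewrite !coef_poly /lcoef subrK. Qed.

Lemma ltrunc_shift V e N L : (lv L <= V)%N ->
  ltrunc (V + e) N L = 'X^e * ltrunc V N L %[modX N].
Proof.
move=> hV; apply/eqmodXP => k kN; rewrite coefXnM !coef_poly kN.
case: ltnP => ke.
  rewrite lcoef_eq0 // addrAC subr_lt0 -PoszD ltz_nat.
  by apply: (@leq_trans (e + lv L)); rewrite ?ltn_add2r // addnC leq_add2r.
rewrite (leq_ltn_trans (leq_subr e k) kN) -subzn // PoszD; congr lcoef; ring.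
Qed.

Lemma ltruncM_val N L1 L2 :
  ltrunc (lv L1 + lv L2) N (lmul L1 L2) = ltrunc (lv L1) N L1 * ltrunc (lv L2) N L2 %[modX N].
Proof.
rewrite (ltrunc_val N (lmul L1 L2)) !ltrunc_val; apply/eqmodXP => k kN.
rewrite coefM coef_poly kN; apply: eq_bigr => i _.
have ik : (i <= k)%N by rewrite -ltnS.
by rewrite !coef_poly (leq_ltn_trans ik kN) (leq_ltn_trans (leq_subr i k) kN).
Qed.

Lemma ltruncM V1 V2 N L1 L2 : (lv L1 <= V1)%N -> (lv L2 <= V2)%N ->
  ltrunc (V1 + V2) N (lmul L1 L2) = ltrunc V1 N L1 * ltrunc V2 N L2 %[modX N].
Proof.
move=> /subnKC <- /subnKC <-; set e1 := (V1 - _)%N; set e2 := (V2 - _)%N.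
rewrite (_ : (_ + e1 + (_ + e2) = lv L1 + lv L2 + (e1 + e2))%N); last by lia.
apply: eqmodX_trans (ltrunc_shift (e1 + e2) N (leqnn (lv (lmul L1 L2)))) _.
apply: eqmodX_trans (eqmodXM (eqmodX_refl N _) (ltruncM_val N L1 L2)) _.
by rewrite exprD mulrACA; apply: eqmodXM; apply: eqmodX_sym; apply: ltrunc_shift.
Qed.

Lemma lv_lpow L i : lv (lpow L i) = (i * lv L)%N.
Proof. by elim: i => // i IH; rewrite /= IH mulSn. Qed.

Lemma ltrunc_lone N : (0 < N)%N -> ltrunc 0 N lone = 1.
Proof.
move=> N0; apply/polyP => k; rewrite coef_poly coef1 /lcoef /= !addn0.
by case: k => [|k]; rewrite ?N0 //=; case: ifP.
Qed.

Lemma ltruncX V N L i : (lv L <= V)%N -> (0 < N)%N ->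
  ltrunc (i * V) N (lpow L i) = ltrunc V N L ^+ i %[modX N].
Proof.
move=> hV N0; elim: i => [|i IH]; first by rewrite mul0n ltrunc_lone.
rewrite mulSn exprS; apply: eqmodX_trans _ (eqmodXM (eqmodX_refl N _) IH).
by apply: ltruncM; rewrite // lv_lpow leq_mul.
Qed.

Lemma lv_leval (P : {poly C}) L : (lv (leval P L) <= (size P).-1 * lv L)%N.
Proof.
apply: (big_ind (fun L' => lv L' <= (size P).-1 * lv L)%N) => //.
  by move=> L1 L2 h1 h2 /=; rewrite geq_max h1 h2.
move=> i _ /=; rewrite lv_lpow leq_mul2r -ltnS prednK ?ltn_ord ?orbT //.
exact: leq_ltn_trans (ltn_ord i).
Qed.

Lemma ltrunc_leval (P : {poly C}) L n V N :
  (size P <= n.+1)%N -> (lv L <= V)%N -> (0 < N)%N ->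
  ltrunc (n * V) N (leval P L)
    = \sum_(i < size P) P`_i *: ('X^((n - i) * V) * ltrunc V N L ^+ i) %[modX N].
Proof.
move=> hP hV N0; rewrite /leval ltrunc_sum; apply: eqmodX_sum => i _.
rewrite ltruncZ; apply: eqmodXZ.
have hi : (i <= n)%N by rewrite -ltnS (leq_trans (ltn_ord i) hP).
rewrite -{1}(subnKC hi) mulnDl.
apply: eqmodX_trans (ltrunc_shift _ _ _) (eqmodXM (eqmodX_refl N _) (ltruncX _ hV N0)).
by rewrite lv_lpow leq_mul.
Qed.

(* For h = t^-1 + \sum_k c k t^k, [hpoly c N] is t h(t) truncated below t^N,
   and [hpoly_sub c N g e] is its value at g t^e. *)
Definition hcoef (c : nat -> C) (k : nat) : C :=
  match k with 0 => 1 | 1 => 0 | k'.+1 => c k' end.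

Definition hpoly (c : nat -> C) (N : nat) : {poly C} := \poly_(k < N) hcoef c k.

Definition hpoly_sub (c : nat -> C) (N : nat) (g : C) (e : nat) : {poly C} :=
  hpoly c N \Po (g *: 'X^e).

Lemma ltrunc_hsub_val a b d D c N : (0 < (a * D) %/ d)%N ->
  ltrunc ((a * D) %/ d) N (hsub a b d D c)
    = zeta d (- b%:Z) *: hpoly_sub c N (zeta d b%:Z) ((a * D) %/ d) %[modX N].
Proof.
set v := ((a * D) %/ d)%N => v0; rewrite (ltrunc_val N (hsub a b d D c)).
apply/eqmodXP => k kN; rewrite coefZ coef_comp_scaleXn // !coef_poly kN /= -/v.
have [->|k0] := eqVneq k 0%N.
  by rewrite dvdn0 div0n expr0 mul1r /= (leq_ltn_trans (leq0n k) kN) mulr1.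
have [vk|_] := boolP (v %| k)%N; last by rewrite mulr0.
have m0 : (0 < k %/ v)%N by rewrite divn_gt0 // dvdn_leq // lt0n.
rewrite (leq_ltn_trans (leq_div _ _) kN).
case: (k %/ v)%N m0 => [|[|m]] // _; first by rewrite /= !mulr0.
rewrite /= mulrA (zeta_nat d b) -exprM -zeta_nat (mulnS b m.+1) PoszD zetaD mulrA.
by rewrite zetaNK mul1r.
Qed.

Lemma ltrunc_hsub a b d D c V N v e :
  ((a * D) %/ d)%N = v -> (V - v)%N = e -> (0 < v <= V)%N ->
  ltrunc V N (hsub a b d D c)
    = 'X^e * ((zeta d (- b%:Z))%:P * hpoly_sub c N (zeta d b%:Z) v) %[modX N].
Proof.
move=> <- <- /andP[v0 vV]; rewrite -{1}(subnKC vV) mul_polyC.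
apply: eqmodX_trans (ltrunc_shift _ _ (leqnn _)) _.
exact: eqmodXM (eqmodX_refl _ _) (ltrunc_hsub_val _ _ _ v0).
Qed.

Lemma ltrunc_hser c N : ltrunc 1 N (hser c) = hpoly c N %[modX N].
Proof.
have := @ltrunc_hsub_val 1 0 1 1 c N isT.
by rewrite /hpoly_sub oppr0 zeta0 !scale1r comp_polyXr.
Qed.

(** * Faber polynomials of degree 2 and 4 *)

Lemma is_faberP c n (P : {poly C}) : P \is monic -> size P = n.+1 ->
  \sum_(i < n.+1) P`_i *: ('X^(n - i) * hpoly c n.+1 ^+ i) = 1 %[modX n.+1] ->
  is_faber c n P.
Proof.
move=> mP sP hE; split => //; split => // m m0.
have hv : (lv (leval P (hser c)) <= n)%N by rewrite (leq_trans (lv_leval _ _)) // sP muln1.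
have [hm|] := ltP (m + n%:Z) 0.
  rewrite lcoef_eq0; last by apply: le_lt_trans hm; rewrite lerD2l lez_nat.
  by case: eqP hm => // ->; rewrite addNr ltxx.
case E: (m + n%:Z) => [j|//] _.
have jn : (j <= n)%N by rewrite -lez_nat -E gerDr.
have h1 : ltrunc (n * 1) n.+1 (leval P (hser c)) = 1 %[modX n.+1].
  have := ltrunc_leval (eq_leq sP) (leqnn (lv (hser c))) (ltn0Sn n).
  change (lv (hser c)) with 1%N; rewrite sP => /eqmodX_trans; apply.
  apply: eqmodX_trans hE; apply: eqmodX_sum => i _.
  by rewrite muln1; apply/eqmodXZ/eqmodXM/eqmodXX/ltrunc_hser.
move/eqmodXP: h1 => /(_ j); rewrite ltnS coef1 coef_poly ltnS jn muln1 => /(_ isT).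
have -> : m = j%:Z - n%:Z by rewrite -E addrK.
by rewrite -subr_eq0 opprK subrK eqz_nat.
Qed.

Definition faber2 (c : nat -> C) : {poly C} := 'X^2 - (2 * c 1%N)%:P.

Lemma size_faber2 c : size (faber2 c) = 3%N.
Proof. exact: size_XnsubC. Qed.

Lemma is_faber2 c : is_faber c 2 (faber2 c).
Proof.
apply: is_faberP; [exact: monicXnsubC | exact: size_faber2 |].
rewrite /hpoly poly_def !big_ord_recr !big_ord0 /= /faber2 !coefB !coefXn !coefC /=.
apply: (eqmodX_XnM (r := (c 1%N ^+ 2)%:P * 'X)).
by rewrite -!mul_polyC; ring.
Qed.

Definition faber4 (c : nat -> C) : {poly C} :=
  'X^4 + \poly_(i < 4) [:: 2 * c 1%N ^+ 2 - 4 * c 3%N; - (4 * c 2%N); - (4 * c 1%N); 0]`_i.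

Lemma size_faber4 c : size (faber4 c) = 5%N.
Proof. by rewrite size_polyDl size_polyXn // ltnS size_poly. Qed.

Lemma is_faber4 c : is_faber c 4 (faber4 c).
Proof.
apply: is_faberP; last 1 first.
- rewrite /hpoly poly_def !big_ord_recr !big_ord0 /= /faber4 !coefD !coefXn !coef_poly /=.
  (* Since hpoly c 5 = 1 + X^2 u, the sum is 1 + 2 X^4 (3 u - a1) (u - a1) + O(X^5)
     and u - a1 = X (a2 + a3 X). *)
  set u : {poly C} := (c 1%N)%:P + (c 2%N)%:P * 'X + (c 3%N)%:P * 'X^2.
  apply: (eqmodX_XnM (r := 2%:P * (3%:P * u - (c 1%N)%:P) * ((c 2%N)%:P + (c 3%N)%:P * 'X)
    + 4%:P * 'X * u ^+ 3 + 'X^3 * u ^+ 4 - (4 * c 1%N)%:P * 'X * u ^+ 2 - (4 * c 2%N)%:P * u)).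
  by rewrite /u -!mul_polyC; ring.
- by rewrite monicE lead_coefDl ?lead_coefXn // size_polyXn ltnS size_poly.
- exact: size_faber4.
Qed.

(** * Replication formulas as polynomial congruences *)

Lemma hpoly_sub_comp c N b e g s :
  hpoly_sub c N b e \Po (g *: 'X^s) = hpoly_sub c N (b * g ^+ e) (s * e).
Proof.
rewrite /hpoly_sub -comp_polyA; congr (_ \Po _).
by rewrite comp_polyZ comp_Xn_poly exprZn -exprM scalerA.
Qed.

(* Turns a polynomial expression in terms [ltrunc V N (hsub ...)] into an
   explicit polynomial; the right-hand side is an evar filled in on the way. *)
Ltac ltrunc_expand := repeat first
  [ apply: ltrunc_hsub; [cbv; reflexivity | cbv; reflexivity | by []]
  | apply: eqmodXD | apply: eqmodXN | apply: eqmodXM | apply: eqmodXX | apply: eqmodXZ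
  | apply: eqmodX_refl ].

Ltac zeta_simpl := rewrite ?zetaN ?zeta0 ?zeta_half ?zeta_quarter ?zeta_quarter2
  ?zeta_quarter3 ?invrN ?invr1 ?invCi ?opprK.

(* With F (m, false) = f^[m] and F (m, true) = f^[m sqrt 2], these are the
   replicates (f^[x])^[m] and (f^[x])^[m sqrt 2]. *)
Definition rep (F : nat * bool -> nat -> C) x m := F (idx_mul (m, false) x).
Definition rep_sqrt2 (F : nat * bool -> nat -> C) x m := F (idx_mul (m, true) x).

Section Replication.
Variable F : nat * bool -> nat -> C.
Hypothesis HF : completely_replicable2 F.
Variable x : nat * bool.
Hypothesis x0 : (0 < x.1)%N.

Local Notation h := (rep F x 1).
Local Notation h2 := (rep F x 2).
Local Notation hs := (rep_sqrt2 F x 1).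

Lemma replication2_poly N : (0 < N)%N ->
  hpoly_sub h N 1 2 ^+ 2 - (2 * h 1%N)%:P * 'X^4
  = hpoly_sub h2 N 1 4 + 'X^3 * (hpoly_sub h N 1 1 - hpoly_sub h N (-1) 1)
    + 'X^2 * (hpoly_sub hs N 1 2 - hpoly_sub hs N (-1) 2) %[modX N].
Proof.
move=> N0; have hR := eq_ltrunc 4 N (HF x0 (ltn0Sn 1) (is_faber2 h)).
have hL := ltrunc_leval (eq_leq (size_faber2 h)) (leqnn (lv (hsub 1 0 1 2 h))) N0.
apply: (eqmodX_trans (q := ltrunc 4 N (leval (faber2 h) (hsub 1 0 1 2 h)))).
  apply: eqmodX_sym; apply: eqmodX_trans hL _.
  rewrite size_faber2 !big_ord_recr big_ord0 /= /faber2 !coefB !coefXn !coefC /=.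
  apply: eqmodX_trans; first by ltrunc_expand.
  by apply: eqmodX_eq; zeta_simpl; rewrite /rep -!mul_polyC; ring.
rewrite hR ltruncD !ltrunc_sum big_mkcond [X in _ + X]big_mkcond /=.
rewrite !big_ord_recr !big_ord0 /= !ltrunc_sum !big_ord_recr !big_ord0 /=.
apply: eqmodX_trans; first by ltrunc_expand.
by apply: eqmodX_eq; zeta_simpl; rewrite /rep /rep_sqrt2 /divn /=; ring.
Qed.

Lemma replication2_poly_sub N g s : (0 < N)%N -> (0 < s)%N ->
  hpoly_sub h N (g ^+ 2) (s * 2) ^+ 2 - (2 * h 1%N)%:P * (g%:P * 'X^s) ^+ 4
  = hpoly_sub h2 N ((g ^+ 2) ^+ 2) (s * 4)
    + (g%:P * 'X^s) ^+ 3 * (hpoly_sub h N g s - hpoly_sub h N (- g) s)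
    + (g%:P * 'X^s) ^+ 2
      * (hpoly_sub hs N (g ^+ 2) (s * 2) - hpoly_sub hs N (- g ^+ 2) (s * 2)) %[modX N].
Proof.
move=> N0 s0; have := eqmodX_comp g s0 (replication2_poly N0).
rewrite !(comp_polyB, comp_polyD, comp_polyM, comp_polyC, comp_polyX, hpoly_sub_comp).
rewrite !mul1r !mulN1r expr1 muln1 (exprM g 2 2) -!mul_polyC => h.
by apply: eqmodX_trans (eqmodX_trans _ h) _; apply: eqmodX_eq; ring.
Qed.

Lemma replication2_coef_q2 : h 1%N ^+ 2 + 2 * h 3%N = h2 1%N + 2 * h 4%N + 2 * hs 2%N.
Proof.
have /eqmodXP/(_ 8%N isT) := @replication2_poly 9 isT.
rewrite !(coefB, coefD, coefXnM, coefCM, coefXn) expr2 coefM !big_ord_recr big_ord0 /=.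
rewrite /hpoly_sub !coef_comp_scaleXn // /hpoly !coef_poly /= => /eqP.
rewrite -subr_eq0 => /eqP e; apply/eqP; rewrite -subr_eq0 -{}e; apply/eqP; ring.
Qed.

Local Notation h4 := (rep F x 4).
Local Notation hs2 := (rep_sqrt2 F x 2).

Lemma replication4_poly N : (0 < N)%N ->
  hpoly_sub h N 1 4 ^+ 4 - (4 * h 1%N)%:P * 'X^8 * hpoly_sub h N 1 4 ^+ 2
    - (4 * h 2%N)%:P * 'X^12 * hpoly_sub h N 1 4 + (2 * h 1%N ^+ 2 - 4 * h 3%N)%:P * 'X^16
  = hpoly_sub h4 N 1 16 + 'X^12 * (hpoly_sub h2 N 1 4 - hpoly_sub h2 N (-1) 4)
    + 'X^15 * (hpoly_sub h N 1 1 - 'i%:P * hpoly_sub h N 'i 1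
               - hpoly_sub h N (-1) 1 + 'i%:P * hpoly_sub h N (- 'i) 1)
    + 'X^8 * (hpoly_sub hs2 N 1 8 - hpoly_sub hs2 N (-1) 8)
    + 'X^14 * (hpoly_sub hs N 1 2 - 'i%:P * hpoly_sub hs N 'i 2
               - hpoly_sub hs N (-1) 2 + 'i%:P * hpoly_sub hs N (- 'i) 2) %[modX N].
Proof.
move=> N0; have hR := eq_ltrunc 16 N (HF x0 (isT : 0 < 4)%N (is_faber4 h)).
have hL := ltrunc_leval (eq_leq (size_faber4 h)) (leqnn (lv (hsub 1 0 1 4 h))) N0.
apply: (eqmodX_trans (q := ltrunc 16 N (leval (faber4 h) (hsub 1 0 1 4 h)))).
  apply: eqmodX_sym; apply: eqmodX_trans hL _.
  rewrite size_faber4 !big_ord_recr big_ord0 /= /faber4 !coefD !coefXn !coef_poly /=.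
  apply: eqmodX_trans; first by ltrunc_expand.
  by apply: eqmodX_eq; zeta_simpl; rewrite /rep /idx_mul /divn /= -!mul_polyC; ring.
rewrite hR ltruncD !ltrunc_sum big_mkcond [X in _ + X]big_mkcond /=.
rewrite !big_ord_recr !big_ord0 /= !ltrunc_sum !big_ord_recr !big_ord0 /=.
apply: eqmodX_trans; first by ltrunc_expand.
by apply: eqmodX_eq; zeta_simpl; rewrite /rep /rep_sqrt2 /idx_mul /divn /=; ring.
Qed.
End Replication.

Lemma leq_ser_eqmodX V s L1 L2 : (0 < s)%N -> (lv L1 <= V)%N -> (lv L2 <= V)%N ->
  (forall N, (0 < N)%N -> ltrunc V N L1 \Po 'X^s = ltrunc V N L2 \Po 'X^s %[modX N]) ->
  leq_ser L1 L2.
Proof.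
move=> s0 h1 h2 hN m.
have [hm|] := ltP (m + V%:Z) 0.
  by rewrite !lcoef_eq0 // (le_lt_trans _ hm) // lerD2l lez_nat.
case E: (m + V%:Z) => [j|//] _; have -> : m = j%:Z - V%:Z by rewrite -E addrK.
have /eqmodXP/(_ (s * j)%N (ltnSn _)) := hN (s * j).+1 isT.
by rewrite !coef_comp_poly_Xn // dvdn_mulr // mulKn // !coef_poly ltnS leq_pmull.
Qed.

Definition sigma2 (R : comNzRingType) (xs : seq R) : R :=
  \sum_(i < size xs) \sum_(j < size xs | (i < j)%N) xs`_i * xs`_j.

Lemma sigma2_cons (R : comNzRingType) (x : R) xs :
  sigma2 (x :: xs) = x * \sum_(y <- xs) y + sigma2 xs.
Proof.
rewrite /sigma2 /= big_ord_recl; congr (_ + _).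
  rewrite big_mkcond big_ord_recl /= add0r (big_nth 0) big_mkord mulr_sumr.
  by apply: eq_bigr.
apply: eq_bigr => i _; rewrite big_mkcond big_ord_recl /= add0r [RHS]big_mkcond.
by apply: eq_bigr.
Qed.

Lemma sigma2E (R : comNzRingType) (xs : seq R) :
  sigma2 xs *+ 2 = (\sum_(x <- xs) x) ^+ 2 - \sum_(x <- xs) x ^+ 2.
Proof.
elim: xs => [|x xs IH]; first by rewrite /sigma2 /= !big_nil big_ord0 mul0rn expr2 mul0r subr0.
by rewrite sigma2_cons mulrnDl IH !big_cons; ring.
Qed.

Lemma lv_lsigma2 xs V : all (fun L => lv L <= V)%N xs -> (lv (lsigma2 xs) <= V + V)%N.
Proof.
move=> /(all_nthP lzero) hV; apply: (big_ind (fun L => lv L <= V + V)%N) => // [L1 L2 /= ? ?|i _].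
  by rewrite geq_max; apply/andP.
apply: (big_ind (fun L => lv L <= V + V)%N) => // [L1 L2 /= ? ?|j _].
  by rewrite geq_max; apply/andP.
by rewrite leq_add ?hV.
Qed.

Lemma ltrunc_lsigma2 V N xs : all (fun L => lv L <= V)%N xs ->
  ltrunc (V + V) N (lsigma2 xs) = sigma2 (map (ltrunc V N) xs) %[modX N].
Proof.
move=> /(all_nthP lzero) hV; rewrite /lsigma2 /sigma2 ltrunc_sum size_map.
apply: eqmodX_sum => i _; rewrite ltrunc_sum; apply: eqmodX_sum => j _.
by rewrite !(nth_map lzero) //; apply: ltruncM; apply: hV.
Qed.

Lemma sigma2_comp (xs : seq {poly C}) q : sigma2 xs \Po q = sigma2 (map (comp_poly q) xs).
Proof.
rewrite /sigma2 size_map rmorph_sum; apply: eq_bigr => i _.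
rewrite rmorph_sum; apply: eq_bigr => j _.
by rewrite rmorphM !(nth_map 0) // comp_poly0.
Qed.

Lemma eqmodX_sigma2 N (xs ys : seq {poly C}) : size xs = size ys ->
  (forall i, (i < size xs)%N -> xs`_i = ys`_i %[modX N]) -> sigma2 xs = sigma2 ys %[modX N].
Proof.
move=> sz h; rewrite /sigma2 -sz; apply: eqmodX_sum => i _; apply: eqmodX_sum => j _.
by apply: eqmodXM; apply: h.
Qed.

Lemma eqmodX_scaleI N (a : C) p q : a != 0 -> a *: p = a *: q %[modX N] -> p = q %[modX N].
Proof. by move=> a0 /(eqmodXZ a^-1); rewrite !scalerA mulVf // !scale1r. Qed.

Lemma ltrunc_hsub_comp a b d D c V N v e s :
  ((a * D) %/ d)%N = v -> (V - v)%N = e -> (0 < v <= V)%N -> (0 < s)%N ->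
  ltrunc V N (hsub a b d D c) \Po 'X^s
    = 'X^(s * e) * ((zeta d (- b%:Z))%:P * hpoly_sub c N (zeta d b%:Z) (s * v)) %[modX N].
Proof.
move=> hv he hV s0; have := eqmodX_comp 1 s0 (ltrunc_hsub b c N hv he hV).
by rewrite !comp_polyM comp_polyC hpoly_sub_comp expr1n mulr1 comp_Xn_poly !scale1r -exprM.
Qed.

Section Proposition.
Variable F : nat * bool -> nat -> C.
Hypothesis HF : completely_replicable2 F.
Variable N : nat.
Hypothesis N0 : (0 < N)%N.

Local Notation f := (F (1%N, false)).
Local Notation f2 := (F (2%N, false)).
Local Notation fs2 := (F (1%N, true)).
Local Notation hp c g e := (hpoly_sub c N g e).

Local Notation laur_terms :=
  [:: hsub 2 0 1 2 f2; hsub 1 0 1 2 fs2; hsub 2 1 2 2 fs2; hsub 1 0 2 2 f; hsub 1 1 2 2 f].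
Local Notation laur_rhs :=
  (lsub (ladd (lscale (2 * f 2%N) (hsub 1 0 1 2 f))
          (ladd (lscale (-1) (hsub 1 0 1 2 f2)) (lconst (2 * (f 4%N - f 1%N) + 2 * fs2 2%N))))
        (lmul (hsub 1 0 1 2 fs2) (hsub 1 0 1 2 fs2))).
Local Notation poly_terms :=
  [:: hp f2 1 8; 'X^4 * hp fs2 1 4; - ('X^4 * hp fs2 (-1) 4);
      'X^6 * hp f 1 2; - ('X^6 * hp f (-1) 2)].
Local Notation poly_rhs :=
  ((2 * f 2%N)%:P * 'X^12 * hp f 1 4 - 'X^12 * hp f2 1 4
   + (2 * (f 4%N - f 1%N) + 2 * fs2 2%N)%:P * 'X^16 - 'X^8 * hp fs2 1 4 ^+ 2).

Lemma ltrunc_lhs : ltrunc 8 N (lsigma2 laur_terms) \Po 'X^2 = sigma2 poly_terms %[modX N].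
Proof.
have := eqmodX_comp 1 (isT : 0 < 2)%N (@ltrunc_lsigma2 4 N laur_terms isT).
rewrite scale1r sigma2_comp => h; apply: eqmodX_trans h _; apply: eqmodX_sigma2 => // i.
case: i => [|[|[|[|[|i]]]]] // _ /=;
  (apply: eqmodX_trans;
     first by apply: ltrunc_hsub_comp; [cbv; reflexivity | cbv; reflexivity | by [] | by []]);
  by apply: eqmodX_eq; zeta_simpl; ring.
Qed.

Lemma ltrunc_rhs : ltrunc 8 N laur_rhs \Po 'X^2 = poly_rhs %[modX N].
Proof.
set k := 2 * _ + _; set L := hsub 1 0 1 2 fs2.
have hC : ltrunc 8 N (lconst k) \Po 'X^2 = k%:P * 'X^16 %[modX N].
  have := eqmodX_comp 1 (isT : 0 < 2)%N (ltruncC 8 N k).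
  by rewrite scale1r comp_polyM comp_polyC comp_Xn_poly -exprM.
have hM : ltrunc 8 N (lmul L L) \Po 'X^2 = (ltrunc 4 N L \Po 'X^2) ^+ 2 %[modX N].
  have := eqmodX_comp 1 (isT : 0 < 2)%N (@ltruncM 4 4 N L L isT isT).
  by rewrite scale1r comp_polyM expr2.
rewrite ltruncB !ltruncD !ltruncZ !comp_polyB !comp_polyD !comp_polyZ.
apply: eqmodX_trans.
  repeat first [ apply: ltrunc_hsub_comp; [cbv; reflexivity | cbv; reflexivity | by [] | by []]
    | exact: hC | apply: eqmodX_trans hM _
    | apply: eqmodXD | apply: eqmodXN | apply: eqmodXX | apply: eqmodXZ ].
by apply: eqmodX_eq; zeta_simpl; rewrite -!mul_polyC; ring.
Qed.

Lemma sigma2_termsE : sigma2 poly_terms = poly_rhs %[modX N].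
Proof.
have hi : ('i%:P : {poly C}) ^+ 2 = -1 by rewrite -rmorphXn sqrCi rmorphN1.
have d1 := @replication2_poly_sub F HF (1%N, false) isT N 1 2 N0 isT.
have d2 := @replication2_poly F HF (1%N, false) isT N N0.
have d3 := @replication2_poly_sub F HF (1%N, false) isT N 'i 1 N0 isT.
have d4 := @replication2_poly_sub F HF (1%N, true) isT N 1 2 N0 isT.
have d5 := @replication2_poly_sub F HF (1%N, true) isT N 'i 2 N0 isT.
have d6 := @replication2_poly_sub F HF (2%N, false) isT N 1 4 N0 isT.
have d7 := @replication4_poly F HF (1%N, false) isT N N0.
have dK : (f 1%N ^+ 2 + 2 * f 3%N)%:P = (f2 1%N + 2 * f 4%N + 2 * fs2 2%N)%:P %[modX N].
  by apply: eqmodX_eq; rewrite (@replication2_coef_q2 F HF (1%N, false) isT).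
rewrite !expr1n in d1 d4 d6; rewrite !sqrCi sqrrN !expr1n opprK in d3 d5.
have e1 : \sum_(x <- poly_terms) x = hp f 1 4 ^+ 2 - (2 * f 1%N)%:P * 'X^8 %[modX N].
  apply: eqmodX_trans (eqmodX_trans _ (eqmodX_sym d1)) _; apply: eqmodX_eq.
    by rewrite !big_cons big_nil; ring.
  by ring.
(* 2 sigma2 = e1^2 - \sum x^2: the squares x^2 are the left sides of d6, of d4
   and d5 (times X^8) and of d2 and d3 (times X^12), while e1^2 = P2(f)^2 is
   matched by the n = 4 formula d7. *)
apply: (@eqmodX_scaleI _ 2); first by rewrite pnatr_eq0.
rewrite !scaler_nat sigma2E; apply: eqmodX_trans (eqmodXD (eqmodXX 2 e1) (eqmodX_refl _ _)) _.
apply: (eqmodX_lincomb (c := 1) d7); apply: (eqmodX_lincomb (c := (-1)) d6).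
apply: (eqmodX_lincomb (c := 'X^8) d4); apply: (eqmodX_lincomb (c := (- 'X^8)) d5).
apply: (eqmodX_lincomb (c := (- 'X^12)) d2); apply: (eqmodX_lincomb (c := (- 'X^12)) d3).
apply: (eqmodX_lincomb (c := (2%:P * 'X^16)) dK).
by apply: eqmodX_eq; rewrite !big_cons big_nil; ring: hi.
Qed.
End Proposition.

Theorem proposition4p11 (F : nat * bool -> nat -> C) :
  completely_replicable2 F ->
  let f := F (1%N, false) in
  let f2 := F (2%N, false) in
  let fs2 := F (1%N, true) in
  leq_ser
    (lsigma2 [:: hsub 2 0 1 2 f2; hsub 1 0 1 2 fs2; hsub 2 1 2 2 fs2;
                 hsub 1 0 2 2 f; hsub 1 1 2 2 f])
    (lsub
      (ladd (lscale (2 * f 2%N) (hsub 1 0 1 2 f))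
        (ladd (lscale (-1) (hsub 1 0 1 2 f2))
          (lconst (2 * (f 4%N - f 1%N) + 2 * fs2 2%N))))
      (lmul (hsub 1 0 1 2 fs2) (hsub 1 0 1 2 fs2))).
Proof.
move=> HF f f2 fs2; apply: (@leq_ser_eqmodX 8 2) => // [|N N0].
  exact: (@lv_lsigma2 _ 4).
apply: eqmodX_trans (ltrunc_lhs F N) _.
apply: eqmodX_trans (sigma2_termsE HF N0) _.
exact/eqmodX_sym/ltrunc_rhs.
Qed.
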